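(* For every integer $n\ge 3$, $$Kf(M_n)=\frac{n^{3}-n}{6}+\frac{n^{2}}{\sqrt{3}}\cdot\frac{p^{n}-q^{n}}{p^{n}+q^{n}+2}.$$
   Context: For an integer $n\ge 3$, the Möbius polyomino network $M_n$ is the graph with vertex set $\{1,\dots,n\}\cup\{1',\dots,n'\}$ whose edges are $\{i,i+1\}$ and $\{i',(i+1)'\}$ for $1\le i\le n-1$, $\{i,i'\}$ for $1\le i\le n$, and the two edges $\{1,n'\}$ and $\{1',n\}$. It has $2n$ vertices and $3n$ edges, and every vertex has degree $3$. $p=2+\sqrt3$, $q=2-\sqrt3$. The Kirchhoff index of a connected graph $G$ is $Kf(G)=\sum_{i<j}r_{ij}$, where $r_{ij}$ is the resistance distance between vertices $i$ and $j$; equivalently $Kf(G)=N\sum_{k=2}^{N}1/\mu_k$, where $N=|V(G)|$ and $0=\mu_1<\mu_2\le\dots\le\mu_N$ are the Laplacian eigenvalues of $G$. *)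

From HB Require Import structures.
From mathcomp Require Import all_boot all_order all_algebra.
Set Implicit Arguments. Unset Strict Implicit. Unset Printing Implicit Defensive.
Import Order.TTheory GRing.Theory Num.Theory.
Local Open Scope ring_scope.

(* A (simple) graph on the vertex set 'I_N is given by a symmetric,
   irreflexive boolean adjacency relation. *)

Definition laplacian (R : nzRingType) (N : nat) (adj : 'I_N -> 'I_N -> bool)
  : 'M[R]_N :=
  \matrix_(i, j) (if i == j then (\sum_(k < N) (adj i k : nat))%:R
                  else - (adj i j : nat)%:R).

(* Resistance distance between i and j: inject a unit current at i and
   extract it at j; r_ij is the resulting potential difference x_i - x_j,
   where x solves x L = e_i - e_j (L symmetric; x is a particular solution
   obtained with pinvmx; for a connected graph the difference x_i - x_j
   does not depend on the chosen solution). *)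
Definition resistance (R : fieldType) (N : nat) (adj : 'I_N -> 'I_N -> bool)
  (i j : 'I_N) : R :=
  let u : 'rV[R]_N := delta_mx 0 i - delta_mx 0 j in
  let x := u *m pinvmx (laplacian R adj) in
  x 0 i - x 0 j.

Definition kirchhoff (R : fieldType) (N : nat) (adj : 'I_N -> 'I_N -> bool) : R :=
  \sum_(i < N) \sum_(j < N | (i < j)%N) resistance R adj i j.

(* Möbius polyomino network M_n on 2n vertices.  Encoding (0-based):
   vertex k (1 <= k <= n) is index k-1, vertex k' is index n+k-1. *)
Definition mobius_edge (n a b : nat) : bool :=
  [|| [&& (a < n)%N, (b < n)%N & b == a.+1]
    , [&& (n <= a)%N, (b < 2 * n)%N & b == a.+1]
    , [&& (a < n)%N & b == a + n]
    , (a == 0%N) && (b == (2 * n).-1)                   (* {1, n'} *)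
    | (a == n) && (b == n.-1) ].                        (* {1', n} *)

Definition mobius_adj (n : nat) (x y : 'I_(2 * n)) : bool :=
  mobius_edge n x y || mobius_edge n y x.
Arguments mobius_adj n x y : clear implicits.

From HB Require Import structures.
From mathcomp Require Import all_boot all_order all_algebra zify ring lra.
Set Implicit Arguments. Unset Strict Implicit. Unset Printing Implicit Defensive.
Import Order.TTheory GRing.Theory Num.Theory.
Local Open Scope ring_scope.

(* Numbering 1..n, 1'..n' as 0..2n-1, M_n is the circulant graph on
   Z/2n in which a is adjacent to a+1, a-1 and a+n.  Instead of computing the
   Laplacian spectrum we exhibit a Green function: a function g on Z/2n with
   (g L)(d) = [d = 0] - 1/(2n).  Its translates x_t = g(t - i) - g(t - j) are
   potentials for a unit current from i to j, so by connectivity (the kernel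
   of L is the constants) r_ij = 2 g(0) - g(i - j) - g(j - i), and summing
   Kf(M_n) = 2n (2n g(0) - sum_d g(d)).  The function g is the average of an
   even part, the quadratic Green function -e(n-e)/(2n) of the n-cycle, and an
   odd part built from q^e, q = 2 - sqrt 3, solving 4k_e = k_(e-1) + k_(e+1)
   with k_n = -k_0.  Hence g(0) = (1 - q^n) / (4 sqrt3 (1 + q^n)) and
   sum_d g(d) = -(n^2 - 1)/12, which give the closed form since p q = 1. *)

Section SimpleGraphLaplacian.
Variables (R : realFieldType) (N : nat) (adj : rel 'I_N).
Hypotheses (adj_sym : symmetric adj) (adj_irr : irreflexive adj).
Local Notation L := (laplacian R adj).

Definition degree (b : 'I_N) : R := \sum_k (adj b k : nat)%:R.

Lemma laplacian_rowE (y : 'rV[R]_N) (b : 'I_N) :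
  (y *m L) 0 b = degree b * y 0 b - \sum_k (adj b k : nat)%:R * y 0 k.
Proof.
rewrite mxE (bigD1 b) //= [in RHS](bigD1 b) //= adj_irr mul0r add0r.
rewrite !mxE eqxx natr_sum mulrC -sumrN; congr (_ + _).
by apply: eq_bigr => k /negbTE kb; rewrite mxE kb adj_sym mulrN mulrC.
Qed.

Lemma harmonic_max (y : 'rV[R]_N) (m : 'I_N) :
  y *m L = 0 -> (forall k, y 0 k <= y 0 m) ->
  forall k, adj m k -> y 0 k = y 0 m.
Proof.
move=> yL0 ymax k mk.
have gap0 : \sum_k (adj m k : nat)%:R * (y 0 m - y 0 k) = 0.
  under eq_bigr => j _ do rewrite mulrBr.
  by rewrite sumrB -mulr_suml -/(degree m) -laplacian_rowE yL0 mxE.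
have gap_ge0 j : true -> 0 <= (adj m j : nat)%:R * (y 0 m - y 0 j).
  by move=> _; rewrite mulr_ge0 ?subr_ge0.
have := psumr_eq0P gap_ge0 gap0 (i := k) isT.
by rewrite mk mul1r => /eqP; rewrite subr_eq0 => /eqP.
Qed.

Lemma laplacian_kernel_const (y : 'rV[R]_N) :
  (forall a b, connect adj a b) -> y *m L = 0 -> forall a b, y 0 a = y 0 b.
Proof.
move=> conn yL0 a b.
have [m _ ymax] := @arg_maxP _ _ 'I_N a predT (fun k => y 0 k) isT.
pose top := [pred k | y 0 k == y 0 m].
have top_closed : closed adj top.
  apply: intro_closed; first exact: sym_connect_sym.
  move=> x z xz /eqP ytop; rewrite inE -ytop.
  by apply/eqP/(harmonic_max yL0) => // k; rewrite ytop; apply: ymax.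
have inTop t : y 0 t = y 0 m.
  by apply/eqP; rewrite -[_ == _]/(t \in top) -(closed_connect top_closed (conn m t)) inE.
by rewrite !inTop.
Qed.

Lemma resistance_potential (x : 'rV[R]_N) (i j : 'I_N) :
  (forall a b, connect adj a b) ->
  x *m L = delta_mx 0 i - delta_mx 0 j -> resistance R adj i j = x 0 i - x 0 j.
Proof.
move=> conn xL; rewrite /resistance /=.
set u := delta_mx 0 i - delta_mx 0 j in xL *.
have uL : (u <= L)%MS by rewrite -xL submxMl.
have diffL0 : (u *m pinvmx L - x) *m L = 0 by rewrite mulmxBl mulmxKpV // xL subrr.
have := laplacian_kernel_const conn diffL0 i j.
rewrite ![(_ - x) _ _]mxE ![(- x) _ _]mxE; lra.
Qed.

End SimpleGraphLaplacian.

Lemma sum_pairs_double (V : zmodType) (N : nat) (S : 'I_N -> 'I_N -> V) :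
  (forall i j, S i j = S j i) -> (forall i, S i i = 0) ->
  \sum_(i < N) \sum_(j < N) S i j = (\sum_(i < N) \sum_(j < N | (i < j)%N) S i j) *+ 2.
Proof.
move=> Ssym Sdiag.
have split_j (i : 'I_N) : \sum_(j < N) S i j =
    \sum_(j < N | (i < j)%N) S i j + \sum_(j < N | (j < i)%N) S i j.
  rewrite (bigID (fun j : 'I_N => (i < j)%N)) /=; congr (_ + _).
  rewrite (bigD1 i) ?ltnn //= Sdiag add0r; apply: eq_bigl => j.
  by rewrite -leqNgt leq_eqVlt -val_eqE /= orbC; case: ltngtP.
under eq_bigr => i _ do rewrite split_j.
rewrite big_split mulr2n /=; congr (_ + _).
rewrite (exchange_big_dep xpredT) //=; apply: eq_bigr => i _.
by apply: eq_bigr => j _; rewrite Ssym.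
Qed.

Section MobiusCombinatorics.
Variable n : nat.
Local Notation N := (2 * n).
Local Open Scope nat_scope.

Definition cyc_succ (a : nat) : nat := if a.+1 == N then 0 else a.+1.
Definition cyc_pred (a : nat) : nat := if a == 0 then N.-1 else a.-1.
Definition antipode (a : nat) : nat := if a < n then a + n else a - n.

Definition cdiff (a b : nat) : nat := if a <= b then b - a else b + N - a.

Lemma cyc_succ_lt a : a < N -> cyc_succ a < N.
Proof. by rewrite /cyc_succ; case: ifP; lia. Qed.

Lemma cyc_pred_lt a : a < N -> cyc_pred a < N.
Proof. by rewrite /cyc_pred; case: ifP; lia. Qed.

Lemma antipode_lt a : a < N -> antipode a < N.
Proof. by rewrite /antipode; case: ifP; lia. Qed.

Lemma cyc_predK a : a < N -> cyc_succ (cyc_pred a) = a.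
Proof. by rewrite /cyc_succ /cyc_pred; case: ifP; case: ifP; lia. Qed.

Lemma cyc_succ_pred a b : a < N -> b < N -> (a == cyc_succ b) = (b == cyc_pred a).
Proof. by rewrite /cyc_succ /cyc_pred; case: ifP; case: ifP; lia. Qed.

Lemma antipode_sym a b : a < N -> b < N -> (a == antipode b) = (b == antipode a).
Proof. by rewrite /antipode; case: ifP; case: ifP; lia. Qed.

Lemma top_edge a : a.+1 < n -> mobius_edge n a a.+1.
Proof. by move=> an; rewrite /mobius_edge an (ltnW an) eqxx. Qed.

Lemma bottom_edge a : n <= a -> a.+1 < N -> mobius_edge n a a.+1.
Proof. by move=> na aN; rewrite /mobius_edge na aN eqxx !orbT. Qed.

Lemma rung_edge a : a < n -> mobius_edge n a (a + n).
Proof. by move=> an; rewrite /mobius_edge an eqxx !orbT. Qed.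

Lemma twist_edge_first : mobius_edge n 0 N.-1.
Proof. by rewrite /mobius_edge !eqxx !orbT. Qed.

Lemma twist_edge_last : mobius_edge n n n.-1.
Proof. by rewrite /mobius_edge !eqxx !orbT. Qed.

Lemma mobius_edge_cases a b : 0 < n -> b < N -> mobius_edge n a b ->
  [|| b == cyc_succ a, a == cyc_succ b | b == antipode a].
Proof.
rewrite /mobius_edge /cyc_succ /antipode => n_gt0 bN.
case/orP => [/and3P[_ _ /eqP ba] | /orP[/and3P[_ _ /eqP ba] | /orP[]]].
- by subst b; apply/or3P/Or31; rewrite ifF //; lia.
- by subst b; apply/or3P/Or31; rewrite ifF //; lia.
- by case/andP => [an /eqP->]; apply/or3P/Or33; rewrite an.
case/orP => /andP[/eqP-> /eqP->]; apply/or3P/Or32.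
  by rewrite ifT //; lia.
by rewrite ifF prednK //; lia.
Qed.

Lemma mobius_edge_succ a : a < N ->
  mobius_edge n a (cyc_succ a) || mobius_edge n (cyc_succ a) a.
Proof.
rewrite /cyc_succ => aN; case: ifP => [/eqP aN1 | /negbT aN1].
  by rewrite (_ : a = N.-1) ?twist_edge_first ?orbT //; lia.
case: (ltngtP a.+1 n) => [an | na | an].
- by rewrite top_edge.
- by rewrite bottom_edge //; lia.
- by rewrite an (_ : a = n.-1) ?twist_edge_last ?orbT //; lia.
Qed.

Lemma mobius_edge_antipode a : a < N ->
  mobius_edge n a (antipode a) || mobius_edge n (antipode a) a.
Proof.
rewrite /antipode => aN; case: ifP => [an | /negbT na]; first by rewrite rung_edge.
have -> : mobius_edge n (a - n) a = mobius_edge n (a - n) (a - n + n).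
  by rewrite subnK // leqNgt.
by rewrite rung_edge ?orbT //; lia.
Qed.

Lemma mobius_adj_neighbours a b : a < N -> b < N ->
  mobius_edge n a b || mobius_edge n b a =
  [|| b == cyc_succ a, b == cyc_pred a | b == antipode a].
Proof.
move=> aN bN; have n_gt0 : 0 < n by lia.
apply/idP/idP.
  case/orP => [/(mobius_edge_cases n_gt0 bN) | /(mobius_edge_cases n_gt0 aN)];
    by rewrite (cyc_succ_pred aN bN) ?(antipode_sym aN bN) => /or3P[] ->; rewrite ?orbT.
case/or3P => /eqP ->; [exact: mobius_edge_succ | | exact: mobius_edge_antipode].
by have := mobius_edge_succ (cyc_pred_lt aN); rewrite cyc_predK // orbC.
Qed.

Lemma neighbours_uniq a : 3 <= n -> a < N ->
  uniq [:: a; cyc_succ a; cyc_pred a; antipode a].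
Proof.
move=> n_ge3 aN; rewrite /= !inE !negb_or /cyc_succ /cyc_pred /antipode.
by case: ifP; case: ifP; case: ifP => *; rewrite ?andbT; repeat (apply/andP; split); lia.
Qed.

Lemma cdiff_lt a b : a < N -> b < N -> cdiff a b < N.
Proof. by rewrite /cdiff; case: ifP; lia. Qed.

Lemma cdiff_eq0 a b : a < N -> b < N -> (cdiff a b == 0) = (a == b).
Proof. by rewrite /cdiff; case: ifP; lia. Qed.

Lemma cdiffI a b c : a < N -> b < N -> c < N -> cdiff a b = cdiff a c -> b = c.
Proof. by rewrite /cdiff; case: ifP; case: ifP; lia. Qed.

Lemma cdiffIl a b c : a < N -> b < N -> c < N -> cdiff b a = cdiff c a -> b = c.
Proof. by rewrite /cdiff; case: ifP; case: ifP; lia. Qed.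

(* The cyclic difference commutes with the three neighbour maps: M_n is
   invariant under the rotations of Z/2n. *)
Lemma cdiff_succ a b : a < N -> b < N -> cdiff a (cyc_succ b) = cyc_succ (cdiff a b).
Proof. by rewrite /cdiff /cyc_succ; case: ifP; case: ifP; case: ifP; case: ifP; lia. Qed.

Lemma cdiff_pred a b : a < N -> b < N -> cdiff a (cyc_pred b) = cyc_pred (cdiff a b).
Proof. by rewrite /cdiff /cyc_pred; case: ifP; case: ifP; case: ifP; case: ifP; lia. Qed.

Lemma cdiff_antipode a b : a < N -> b < N ->
  cdiff a (antipode b) = antipode (cdiff a b).
Proof. by rewrite /cdiff /antipode; case: ifP; case: ifP; case: ifP; case: ifP; lia. Qed.
End MobiusCombinatorics.

Section MobiusLaplacian.
Variables (R : realFieldType) (n : nat).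
Hypothesis n_ge3 : (3 <= n)%N.
Local Notation N := (2 * n)%N.
Local Notation adj := (mobius_adj n).
Local Notation L := (laplacian R (mobius_adj n)).

Definition succ_ord (a : 'I_N) : 'I_N := Ordinal (cyc_succ_lt (ltn_ord a)).
Definition pred_ord (a : 'I_N) : 'I_N := Ordinal (cyc_pred_lt (ltn_ord a)).
Definition antipode_ord (a : 'I_N) : 'I_N := Ordinal (antipode_lt (ltn_ord a)).
Definition neighbours (a : 'I_N) : seq 'I_N := [:: succ_ord a; pred_ord a; antipode_ord a].

Lemma mobius_adjE (a b : 'I_N) : adj a b = (b \in neighbours a).
Proof. by rewrite /mobius_adj mobius_adj_neighbours // !inE -!val_eqE. Qed.

Lemma neighbours_ord_uniq (a : 'I_N) : uniq (a :: neighbours a).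
Proof. by rewrite -(map_inj_uniq val_inj); apply: neighbours_uniq n_ge3 (ltn_ord a). Qed.

Lemma mobius_adj_sym : symmetric adj.
Proof. by move=> a b; rewrite /mobius_adj orbC. Qed.

Lemma mobius_adj_irr : irreflexive adj.
Proof. by move=> a; rewrite mobius_adjE; case/andP: (neighbours_ord_uniq a) => /negbTE. Qed.

(* M_n is connected: the cycle 0, 1, ..., 2n-1 runs through all vertices. *)
Lemma mobius_connected (a b : 'I_N) : connect adj a b.
Proof.
have N_gt0 : (0 < N)%N by lia.
have from0 (c : 'I_N) : connect adj (Ordinal N_gt0) c.
  case: c => c; elim: c => [|c IH] cN; first by rewrite (bool_irrelevance cN N_gt0).
  apply: connect_trans (IH (ltnW cN)) (connect1 _).
  rewrite mobius_adjE inE; apply/orP; left; rewrite -val_eqE /= /cyc_succ.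
  by case: ifP; lia.
have sym := sym_connect_sym mobius_adj_sym.
by apply: connect_trans (from0 b); rewrite sym.
Qed.

Lemma sum_over_neighbours (F : 'I_N -> R) (b : 'I_N) :
  \sum_k (adj b k : nat)%:R * F k = F (succ_ord b) + F (pred_ord b) + F (antipode_ord b).
Proof.
have := neighbours_ord_uniq b; rewrite cons_uniq => /andP[_ uniq_nb].
transitivity (\sum_(k <- neighbours b) F k); last by rewrite !big_cons big_nil addr0 addrA.
rewrite (big_uniq _ uniq_nb) [RHS]big_mkcond; apply: eq_bigr => k _.
by rewrite mobius_adjE; case: (k \in _); rewrite ?mul1r ?mul0r.
Qed.

Lemma mobius_laplacian_row (y : 'rV[R]_N) (b : 'I_N) :
  (y *m L) 0 b = 3 * y 0 b - (y 0 (succ_ord b) + y 0 (pred_ord b) + y 0 (antipode_ord b)).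
Proof.
rewrite (laplacian_rowE mobius_adj_sym mobius_adj_irr).
have deg3 : degree R (mobius_adj n) b = 3.
  rewrite /degree (eq_bigr (fun k => (adj b k : nat)%:R * 1)) => [|k _]; last by rewrite mulr1.
  by rewrite sum_over_neighbours; ring.
by rewrite deg3 sum_over_neighbours.
Qed.
End MobiusLaplacian.

Section GreenFunction.
Variables (R : rcfType) (n : nat).
Hypothesis n_gt1 : (1 < n)%N.
Local Notation s := (Num.sqrt (3 : R)).
Local Notation q := (2 - Num.sqrt (3 : R)).

Lemma sqrt3_sq : s * s = 3.
Proof. by rewrite -expr2 sqr_sqrtr // ler0n. Qed.

Lemma sqrt3_gt0 : 0 < s.
Proof. by rewrite sqrtr_gt0 ltr0n. Qed.

Lemma q_gt0 : 0 < q.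
Proof. have := sqrt3_sq; have := sqrt3_gt0; nra. Qed.

(* q is a root of X^2 - 4X + 1, the characteristic polynomial of the
   recurrence 4 k_e = k_(e-1) + k_(e+1). *)
Lemma q_rec a : q ^+ a.+2 = 4 * q ^+ a.+1 - q ^+ a.
Proof.
apply/eqP; rewrite -subr_eq0 !exprS.
have -> : q * (q * q ^+ a) - (4 * (q * q ^+ a) - q ^+ a) = q ^+ a * (s * s - 3) by ring.
by rewrite sqrt3_sq subrr mulr0.
Qed.

Lemma n_neq0 : (n%:R : R) != 0.
Proof. by rewrite pnatr_eq0; lia. Qed.

(* The symmetric part: potential of the n-cycle with a unit source at 0 and
   a uniform sink, 2 h_e - h_(e-1) - h_(e+1) = [e = 0] - 1/n. *)
Definition cycle_pot (e : nat) : R := - (e%:R * (n%:R - e%:R)) / n%:R / 2.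

Lemma cycle_pot0 : cycle_pot 0 = 0.
Proof. by rewrite /cycle_pot; ring. Qed.

Lemma cycle_potn : cycle_pot n = 0.
Proof. by rewrite /cycle_pot; ring. Qed.

Lemma cycle_pot_interior e : (0 < e)%N ->
  2 * cycle_pot e - cycle_pot e.-1 - cycle_pot e.+1 = - n%:R^-1.
Proof.
case: e => // e _ /=; rewrite /cycle_pot -[e.+2]addn2 -[e.+1]addn1 !natrD.
by field; exact: n_neq0.
Qed.

Lemma cycle_pot_origin : 2 * cycle_pot 0 - cycle_pot 1 - cycle_pot n.-1 = 1 - n%:R^-1.
Proof.
rewrite /cycle_pot (_ : n.-1%:R = n%:R - 1 :> R); last by rewrite -subn1 natrB //; lia.
by field; exact: n_neq0.
Qed.

(* The antisymmetric part: a solution of 4 k_e - k_(e-1) - k_(e+1) = [e = 0]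
   on 0..n which is antiperiodic, k_n = - k_0. *)
Definition twisted_pot (e : nat) : R := (q ^+ e - q ^+ (n - e)) / (2 * s * (1 + q ^+ n)).

Lemma twisted_potn : twisted_pot n = - twisted_pot 0.
Proof. by rewrite /twisted_pot subnn subn0; ring. Qed.

Lemma twisted_pot_interior e : (0 < e)%N -> (e < n)%N ->
  4 * twisted_pot e - twisted_pot e.-1 - twisted_pot e.+1 = 0.
Proof.
case: e => // e _ en; rewrite /twisted_pot /=.
have -> : (n - e = (n - e.+2).+2)%N by lia.
have -> : (n - e.+1 = (n - e.+2).+1)%N by lia.
by rewrite !q_rec; ring.
Qed.

Lemma twisted_pot_origin :
  4 * twisted_pot 0 - twisted_pot 1 + twisted_pot n.-1 = 1.
Proof.
rewrite /twisted_pot subn0 subn1 (_ : (n - n.-1 = 1)%N); last by lia.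
have -> : q ^+ n = q * q ^+ n.-1 by rewrite -exprS prednK //; lia.
set Y := q ^+ n.-1; have Y_gt0 : 0 < Y by rewrite exprn_gt0 // q_gt0.
have qY_gt0 : 0 < q * Y by rewrite mulr_gt0 // q_gt0.
have denom_gt0 : 0 < 2 * s * (1 + q * Y) by rewrite !mulr_gt0 ?sqrt3_gt0 //; lra.
have numer : 4 * (1 - q * Y) - (q - Y) + (Y - q) = 2 * s * (1 + q * Y).
  have -> : 4 * (1 - q * Y) - (q - Y) + (Y - q) =
            2 * s * (1 + q * Y) + 2 * Y * (s * s - 3) by ring.
  by rewrite sqrt3_sq subrr mulr0 addr0.
rewrite expr0 expr1 -[RHS](divff (lt0r_neq0 denom_gt0)) -numer.
by field; rewrite numer lt0r_neq0.
Qed.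

(* The Green function of M_n on Z/2n: the two halves a and a + n combine the
   symmetric and the antisymmetric parts. *)
Definition green (d : nat) : R :=
  if (d < n)%N then (cycle_pot d + twisted_pot d) / 2
  else (cycle_pot (d - n) - twisted_pot (d - n)) / 2.

(* g on the two halves; green_lo also holds at d = n and green_wrap at d = 2n,
   because h_n = h_0 and k_n = - k_0. *)
Lemma green_lo d : (d <= n)%N -> green d = (cycle_pot d + twisted_pot d) / 2.
Proof.
rewrite /green leq_eqVlt => /orP[/eqP ->|->] //.
by rewrite ltnn subnn cycle_pot0 cycle_potn twisted_potn; ring.
Qed.

Lemma green_hi e : (e < n)%N -> green (e + n) = (cycle_pot e - twisted_pot e) / 2.
Proof. by move=> en; rewrite /green ifF ?addnK //; lia. Qed.

Lemma green_wrap : green 0 = (cycle_pot n - twisted_pot n) / 2.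
Proof. by rewrite green_lo // cycle_pot0 cycle_potn twisted_potn; ring. Qed.

Lemma green_equation d : (d < 2 * n)%N ->
  3 * green d - green (cyc_succ n d) - green (cyc_pred n d) - green (antipode n d)
  = (d == 0%N)%:R - n%:R^-1 / 2.
Proof.
move=> dN; have h0 := cycle_pot0; have hn := cycle_potn; have kn := twisted_potn.
have [-> | d_gt0] := posnP d.
  rewrite (_ : cyc_succ n 0 = 1); last by rewrite /cyc_succ; case: ifP; lia.
  rewrite (_ : cyc_pred n 0 = n.-1 + n)%N; last by rewrite /cyc_pred /=; lia.
  rewrite (_ : antipode n 0 = 0 + n)%N; last by rewrite /antipode; case: ifP; lia.
  rewrite !green_hi ?green_lo; try lia.
  by rewrite mulr1n; have := cycle_pot_origin; have := twisted_pot_origin; lra.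
case: (ltngtP d n) => [dn | nd | ->].
- rewrite (_ : cyc_succ n d = d.+1); last by rewrite /cyc_succ; case: ifP; lia.
  rewrite (_ : cyc_pred n d = d.-1); last by rewrite /cyc_pred; case: ifP; lia.
  rewrite (_ : antipode n d = d + n)%N; last by rewrite /antipode; case: ifP; lia.
  rewrite !green_hi ?green_lo; try lia.
  have := cycle_pot_interior d_gt0; have := twisted_pot_interior d_gt0 dn.
  by rewrite mulr0n; lra.
- have [e [-> e_gt0 en]] : exists e, [/\ d = (e + n)%N, (0 < e)%N & (e < n)%N].
    by exists (d - n)%N; split; lia.
  rewrite (_ : cyc_pred n (e + n) = e.-1 + n)%N; last by rewrite /cyc_pred; case: ifP; lia.
  rewrite (_ : antipode n (e + n) = e); last by rewrite /antipode; case: ifP; lia.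
  have green_succ : green (cyc_succ n (e + n)) = (cycle_pot e.+1 - twisted_pot e.+1) / 2.
    rewrite /cyc_succ; case: ifP => [/eqP wrap | /negbT no_wrap].
      by rewrite green_wrap (_ : e.+1 = n) //; lia.
    by rewrite -addSn green_hi //; lia.
  rewrite green_succ !green_hi ?green_lo; try lia.
  have := cycle_pot_interior e_gt0; have := twisted_pot_interior e_gt0 en.
  by rewrite mulr0n; lra.
- rewrite (_ : cyc_succ n n = 1 + n)%N; last by rewrite /cyc_succ; case: ifP; lia.
  rewrite (_ : cyc_pred n n = n.-1); last by rewrite /cyc_pred; case: ifP; lia.
  rewrite (_ : antipode n n = 0); last by rewrite /antipode; case: ifP; lia.
  rewrite (green_hi (e := 1)) // (green_hi (e := 0)) ?green_lo ?leq_pred //; last by lia.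
  have := cycle_pot_origin; have := twisted_pot_origin.
  by rewrite mulr0n; lra.
Qed.

Lemma sum_id (m : nat) : \sum_(0 <= i < m) (i%:R : R) = m%:R * (m%:R - 1) / 2.
Proof.
elim: m => [|m IH]; first by rewrite big_geq // !mul0r.
by rewrite big_nat_recr //= IH -[m.+1]addn1 natrD; field.
Qed.

Lemma sum_sq (m : nat) :
  \sum_(0 <= i < m) (i%:R : R) ^+ 2 = m%:R * (m%:R - 1) * (2 * m%:R - 1) / 6.
Proof.
elim: m => [|m IH]; first by rewrite big_geq // !mul0r.
by rewrite big_nat_recr //= IH -[m.+1]addn1 natrD; field.
Qed.

(* The antisymmetric part cancels between the two halves, so only the
   cycle potential contributes to the total of g. *)
Lemma green_sum : \sum_(d < 2 * n) green d = - (n%:R ^+ 2 - 1) / 12.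
Proof.
have cycle_sum : \sum_(0 <= e < n) cycle_pot e = - (n%:R ^+ 2 - 1) / 12.
  rewrite (eq_bigr (fun e => - n%:R^-1 / 2 * n%:R * e%:R + n%:R^-1 / 2 * e%:R ^+ 2));
    last by move=> e _; rewrite /cycle_pot; ring.
  rewrite big_split /= -!mulr_sumr sum_id sum_sq; field; exact: n_neq0.
rewrite -(big_mkord xpredT) (big_cat_nat (n := n)) //=; last by lia.
rewrite -{2}[n]add0n big_addn (_ : (2 * n - n = n)%N); last by lia.
rewrite -big_split -[RHS]cycle_sum; apply: eq_big_nat => e /andP[_ en] /=.
by rewrite green_hi // (green_lo (ltnW en)); field.
Qed.
End GreenFunction.

Section MobiusResistance.
Variables (R : rcfType) (n : nat).
Hypothesis n_ge3 : (3 <= n)%N.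
Local Notation N := (2 * n)%N.
Local Notation L := (laplacian R (mobius_adj n)).
Local Notation g := (green R n).

Lemma green_potential (i j : 'I_N) :
  (\row_t (g (cdiff n i t) - g (cdiff n j t))) *m L = delta_mx 0 i - delta_mx 0 j.
Proof.
have n_gt1 : (1 < n)%N by lia.
apply/rowP => b; rewrite mobius_laplacian_row // !mxE /=.
have iN := ltn_ord i; have jN := ltn_ord j; have bN := ltn_ord b.
rewrite !cdiff_succ // !cdiff_pred // !cdiff_antipode //.
have eq_i := green_equation R n_gt1 (cdiff_lt iN bN).
have eq_j := green_equation R n_gt1 (cdiff_lt jN bN).
rewrite !cdiff_eq0 // (eq_sym (val i)) (eq_sym (val j)) !val_eqE in eq_i eq_j; lra.
Qed.

Lemma mobius_resistance (i j : 'I_N) :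
  resistance R (mobius_adj n) i j = 2 * g 0 - g (cdiff n j i) - g (cdiff n i j).
Proof.
rewrite (resistance_potential (@mobius_adj_sym n) (mobius_adj_irr n_ge3)
         (mobius_connected n_ge3) (green_potential i j)) !mxE.
by rewrite /cdiff !leqnn !subnn; ring.
Qed.

Lemma sum_green_from (i : 'I_N) : \sum_(j < N) g (cdiff n i j) = \sum_(d < N) g d.
Proof.
have shift_inj : injective (fun j : 'I_N => Ordinal (cdiff_lt (ltn_ord i) (ltn_ord j))).
  by move=> a b /(congr1 val) /= /(cdiffI (ltn_ord i) (ltn_ord a) (ltn_ord b)) /val_inj.
by rewrite [RHS](reindex_inj shift_inj).
Qed.

Lemma sum_green_to (i : 'I_N) : \sum_(j < N) g (cdiff n j i) = \sum_(d < N) g d.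
Proof.
have shift_inj : injective (fun j : 'I_N => Ordinal (cdiff_lt (ltn_ord j) (ltn_ord i))).
  by move=> a b /(congr1 val) /= /(cdiffIl (ltn_ord i) (ltn_ord a) (ltn_ord b)) /val_inj.
by rewrite [RHS](reindex_inj shift_inj).
Qed.

(* Kf(M_n) in terms of g: half the sum of all 4n^2 ordered resistances. *)
Lemma mobius_kirchhoff_green :
  kirchhoff R (mobius_adj n) = N%:R * (N%:R * g 0 - \sum_(d < N) g d).
Proof.
have r_sym (i j : 'I_N) :
    resistance R (mobius_adj n) i j = resistance R (mobius_adj n) j i.
  by rewrite !mobius_resistance; ring.
have r_diag (i : 'I_N) : resistance R (mobius_adj n) i i = 0.
  by rewrite mobius_resistance /cdiff leqnn subnn; ring.
have total : \sum_(i < N) \sum_(j < N) resistance R (mobius_adj n) i j =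
             (N%:R * (N%:R * g 0 - \sum_(d < N) g d)) *+ 2.
  under eq_bigr => i _ do under eq_bigr => j _ do rewrite mobius_resistance.
  under eq_bigr => i _ do rewrite !sumrB sum_green_from sum_green_to sumr_const card_ord.
  by rewrite sumr_const card_ord mulr2n; ring.
apply/eqP; rewrite -(@eqr_pMn2r _ 2) //; apply/eqP.
by rewrite /kirchhoff -sum_pairs_double.
Qed.
End MobiusResistance.

(* Theorem 3.3: with g(0) = k_0/2 and the total of g known, the closed form
   follows from p^n = q^-n. *)
Theorem theorem3p3 (R : rcfType) (n : nat) (hn : (3 <= n)%N) :
  let p : R := 2 + Num.sqrt 3 in
  let q : R := 2 - Num.sqrt 3 in
  kirchhoff R (mobius_adj n) =
    ((n%:R ^+ 3 - n%:R) / 6%:R)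
    + (n%:R ^+ 2 / Num.sqrt 3) * ((p ^+ n - q ^+ n) / (p ^+ n + q ^+ n + 2)).
Proof.
move=> p q.
have n_gt1 : (1 < n)%N by lia.
rewrite mobius_kirchhoff_green // green_sum // green_lo // cycle_pot0 /twisted_pot subn0 expr0.
have s_gt0 := sqrt3_gt0 R; have q_pos : 0 < q := q_gt0 R.
have qn_gt0 : 0 < q ^+ n by rewrite exprn_gt0.
have pq1 : p * q = 1 by rewrite /p /q; have := sqrt3_sq R; lra.
have pn : p ^+ n = (q ^+ n)^-1.
  apply: (mulIf (lt0r_neq0 qn_gt0)).
  by rewrite mulVf ?lt0r_neq0 // -exprMn pq1 expr1n.
rewrite -/q pn natrM; set Q := q ^+ n in qn_gt0 *.
have QQ_gt0 := mulr_gt0 qn_gt0 qn_gt0.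
by field; apply/and4P; split; apply: lt0r_neq0; lra.
Qed.
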